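(* Let $A,B$ be points of the plane and $\vec\alpha,\vec\beta$ unit vectors with oriented angle $\Omega=(\widehat{\vec\alpha,\vec\beta})\in\,]0,\pi[$. Let $L>0$ and $X\in W^{2,\infty}(0,L;\mathbb{R}^2)$ with $\|X'(s)\|=1$ for all $s$, $X(0)=A$, $X(L)=B$, $X'(0)=\vec\alpha$, $X'(L)=\vec\beta$, and such that a continuous determination $\phi$ of the angle $\phi(s)=(\widehat{\vec\alpha,X'(s)})$ is nondecreasing on $[0,L]$. Then for every $s\in[0,L]$ the whole curve lies in the closed half-plane bounded by the tangent line at $X(s)$ on the side of $\vec N(s)=\sigma(X'(s))$, where $\sigma$ is the rotation by $+\pi/2$; i.e. $\langle X(t)-X(s),\sigma(X'(s))\rangle\ge0$ for all $s,t\in[0,L]$.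
   Context: $\langle\cdot,\cdot\rangle$ is the Euclidean inner product of $\mathbb{R}^2$. *)

From Stdlib Require Import Reals.
Open Scope R_scope.

Definition pt := (R * R)%type.

Definition vadd (u v : pt) : pt := (fst u + fst v, snd u + snd v).
Definition vsub (u v : pt) : pt := (fst u - fst v, snd u - snd v).
Definition vscale (c : R) (u : pt) : pt := (c * fst u, c * snd u).

Definition inner (u v : pt) : R := fst u * fst v + snd u * snd v.
Definition vnorm (u : pt) : R := sqrt (inner u u).

Definition rot (theta : R) (u : pt) : pt :=
  (cos theta * fst u - sin theta * snd u, sin theta * fst u + cos theta * snd u).
Definition rot90 (u : pt) : pt := (- snd u, fst u).

Definition has_deriv_on (a b : R) (f df : R -> pt) (s : R) : Prop :=
  forall eps, 0 < eps -> exists delta, 0 < delta /\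
    forall t, a <= t <= b -> t <> s -> Rabs (t - s) < delta ->
      vnorm (vsub (vscale (/ (t - s)) (vsub (f t) (f s))) (df s)) < eps.

(* X restricted to [a,b] is in W^{2,oo}(a,b;R^2) with derivative dX:
   X is differentiable on [a,b] with derivative dX, and dX is Lipschitz
   on [a,b] (i.e. X' in W^{1,oo}). *)
Definition W2inf_with_deriv (a b : R) (X dX : R -> pt) : Prop :=
  (forall s, a <= s <= b -> has_deriv_on a b X dX s) /\
  exists K, forall s t, a <= s <= b -> a <= t <= b ->
    vnorm (vsub (dX s) (dX t)) <= K * Rabs (s - t).

Definition continuous_on_interval (a b : R) (phi : R -> R) : Prop :=
  forall s, a <= s <= b -> forall eps, 0 < eps -> exists delta, 0 < delta /\
    forall t, a <= t <= b -> Rabs (t - s) < delta -> Rabs (phi t - phi s) < eps.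

(* Fix s and put N = sigma(X'(s)).  The function g(u) = <X(u) - X(s), N> has
   derivative <X'(u), N> = sin(phi(u) - phi(s)).  As phi is nondecreasing with
   values in [0, Omega], a subset of [0, pi], this derivative has the sign of
   u - s, so g is nonincreasing before s, nondecreasing after s, and therefore
   bounded below by g(s) = 0. *)
From Stdlib Require Import Reals Lra Psatz.
Open Scope R_scope.

Lemma inner_vsub_l (u v w : pt) : inner (vsub u v) w = inner u w - inner v w.
Proof. unfold inner, vsub; simpl; ring. Qed.

Lemma Rabs_inner_le_vnorm (u v : pt) : Rabs (inner u v) <= vnorm u * vnorm v.
Proof.
  unfold vnorm; rewrite <- sqrt_mult_alt by (unfold inner; nra).
  rewrite <- sqrt_Rsqr_abs; apply sqrt_le_1_alt.
  destruct u as [u1 u2], v as [v1 v2]; unfold inner, Rsqr; simpl.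
  (* Lagrange's identity: |u|^2 |v|^2 - <u,v>^2 = (u1 v2 - u2 v1)^2 *)
  assert (H := pow2_ge_0 (u1 * v2 - u2 * v1)); nra.
Qed.

Lemma vnorm_eq1_inner (v : pt) : vnorm v = 1 -> inner v v = 1.
Proof.
  unfold vnorm; intro Hv.
  assert (Hpos : 0 <= inner v v) by (unfold inner; nra).
  rewrite <- (Rsqr_sqrt _ Hpos), Hv; unfold Rsqr; ring.
Qed.

Lemma sin_sub_ge0 (x y : R) :
  0 <= x <= PI -> 0 <= y <= PI -> y <= x -> 0 <= sin (x - y).
Proof. intros Hx Hy Hyx; apply sin_ge_0; lra. Qed.

Lemma sin_sub_le0 (x y : R) :
  0 <= x <= PI -> 0 <= y <= PI -> x <= y -> sin (x - y) <= 0.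
Proof.
  intros Hx Hy Hxy.
  replace (x - y) with (- (y - x)) by ring; rewrite sin_neg.
  enough (0 <= sin (y - x)) by lra.
  apply sin_sub_ge0; assumption.
Qed.

Lemma inner_rot_rot90_rot (v : pt) (p q : R) :
  vnorm v = 1 -> inner (rot p v) (rot90 (rot q v)) = sin (p - q).
Proof.
  intro Hv; apply vnorm_eq1_inner in Hv; revert Hv.
  destruct v as [v1 v2]; unfold inner, rot90, rot; simpl; intro Hv.
  rewrite sin_minus.
  transitivity ((v1 * v1 + v2 * v2) * (sin p * cos q - cos p * sin q)); [ring|].
  rewrite Hv; ring.
Qed.

Definition has_rderiv_on (a b : R) (f df : R -> R) (s : R) : Prop :=
  forall eps, 0 < eps -> exists delta, 0 < delta /\
    forall t, a <= t <= b -> t <> s -> Rabs (t - s) < delta ->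
      Rabs ((f t - f s) / (t - s) - df s) < eps.

Lemma has_deriv_on_inner (a b : R) (X dX : R -> pt) (N : pt) (s : R) :
  has_deriv_on a b X dX s ->
  has_rderiv_on a b (fun u => inner (X u) N) (fun u => inner (dX u) N) s.
Proof.
  intros HX eps Heps.
  assert (HN : 0 <= vnorm N) by apply sqrt_pos.
  destruct (HX (eps / (vnorm N + 1))) as [delta [Hdelta Hclose]].
  { apply Rdiv_lt_0_compat; lra. }
  exists delta; split; [exact Hdelta|].
  intros t Ht Hts Htd.
  specialize (Hclose t Ht Hts Htd).
  set (w := vsub (vscale (/ (t - s)) (vsub (X t) (X s))) (dX s)) in Hclose.
  replace ((inner (X t) N - inner (X s) N) / (t - s) - inner (dX s) N)
    with (inner w N)
    by (unfold w, inner, vsub, vscale, Rdiv; simpl; ring).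
  eapply Rle_lt_trans; [apply Rabs_inner_le_vnorm|].
  assert (Hw : 0 <= vnorm w) by apply sqrt_pos.
  apply (Rmult_lt_compat_r (vnorm N + 1)) in Hclose; [|lra].
  unfold Rdiv in Hclose; rewrite Rmult_assoc, Rinv_l, Rmult_1_r in Hclose by lra.
  nra.
Qed.

Lemma has_rderiv_on_derivable_pt_lim (a b : R) (f df : R -> R) (s : R) :
  a < s < b -> has_rderiv_on a b f df s -> derivable_pt_lim f s (df s).
Proof.
  intros Hs Hf eps Heps.
  destruct (Hf eps Heps) as [delta [Hdelta Hclose]].
  assert (Hpos : 0 < Rmin delta (Rmin (s - a) (b - s))).
  { repeat apply Rmin_glb_lt; lra. }
  exists (mkposreal _ Hpos); simpl; intros h Hh0 Hh.
  assert (Hh1 := Rlt_le_trans _ _ _ Hh (Rmin_l _ _)).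
  assert (Hh2 := Rlt_le_trans _ _ _ Hh (Rmin_r _ _)).
  assert (Hh3 := Rlt_le_trans _ _ _ Hh2 (Rmin_l _ _)).
  assert (Hh4 := Rlt_le_trans _ _ _ Hh2 (Rmin_r _ _)).
  apply Rabs_def2 in Hh3, Hh4.
  specialize (Hclose (s + h)); replace (s + h - s) with h in Hclose by ring.
  apply Hclose; lra.
Qed.

Lemma has_rderiv_on_continuous (a b : R) (f df : R -> R) :
  (forall s, a <= s <= b -> has_rderiv_on a b f df s) ->
  continuous_on_interval a b f.
Proof.
  intros Hf s Hs eps Heps.
  destruct (Hf s Hs 1 Rlt_0_1) as [delta [Hdelta Hclose]].
  set (K := Rabs (df s) + 1).
  assert (HK : 0 < K) by (unfold K; generalize (Rabs_pos (df s)); lra).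
  exists (Rmin delta (eps / K)); split.
  { apply Rmin_glb_lt; [lra | apply Rdiv_lt_0_compat; lra]. }
  intros t Ht Htd.
  destruct (Req_dec t s) as [-> | Hts].
  { unfold Rminus; rewrite Rplus_opp_r, Rabs_R0; exact Heps. }
  assert (Hq := Hclose t Ht Hts (Rlt_le_trans _ _ _ Htd (Rmin_l _ _))).
  assert (Hts' : t - s <> 0) by lra.
  assert (Hquot : Rabs ((f t - f s) / (t - s)) <= K).
  { replace ((f t - f s) / (t - s)) with (((f t - f s) / (t - s) - df s) + df s)
      by ring.
    unfold K; eapply Rle_trans; [apply Rabs_triang|]; lra. }
  replace (f t - f s) with ((t - s) * ((f t - f s) / (t - s)))
    by (field; exact Hts').
  rewrite Rabs_mult.
  assert (Hsmall := Rlt_le_trans _ _ _ Htd (Rmin_r _ _)).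
  apply (Rmult_lt_compat_r K) in Hsmall; [|exact HK].
  unfold Rdiv in Hsmall; rewrite Rmult_assoc, Rinv_l, Rmult_1_r in Hsmall by lra.
  generalize (Rabs_pos (t - s)) (Rabs_pos ((f t - f s) / (t - s))); nra.
Qed.

Lemma continuous_on_subinterval (a b c d : R) (f : R -> R) :
  a <= c -> d <= b ->
  continuous_on_interval a b f -> continuous_on_interval c d f.
Proof.
  intros Hac Hdb Hf s Hs eps Heps.
  destruct (Hf s ltac:(lra) eps Heps) as [delta [Hdelta Hclose]].
  exists delta; split; [exact Hdelta|].
  intros t Ht; apply Hclose; lra.
Qed.

(* Stdlib's mean value theorems ask for continuity on all of R at the endpoints;
   here g is only continuous relative to [a,b], so we apply MVT on shrunken
   intervals [a + e, b - e] and let e go to 0. *)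
Lemma nondecreasing_of_deriv_nonneg (g dg : R -> R) (a b : R) :
  a <= b -> continuous_on_interval a b g ->
  (forall u, a < u < b -> derivable_pt_lim g u (dg u)) ->
  (forall u, a < u < b -> 0 <= dg u) ->
  g a <= g b.
Proof.
  intros Hab Hc Hd Hpos.
  destruct (Req_dec a b) as [<- | Hne]; [lra|].
  assert (Hinner : forall e, 0 < e -> e < (b - a) / 2 -> g (a + e) <= g (b - e)).
  { intros e He1 He2.
    destruct (MVT_cor2 g dg (a + e) (b - e)) as [c [Hmvt Hc']]; [lra | |].
    { intros c Hc'; apply Hd; lra. }
    assert (0 <= dg c) by (apply Hpos; lra).
    nra. }
  apply Rnot_lt_le; intro Hlt.
  set (eps := (g a - g b) / 2).
  assert (Heps : 0 < eps) by (unfold eps; lra).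
  destruct (Hc a ltac:(lra) eps Heps) as [d1 [Hd1 Hnear_a]].
  destruct (Hc b ltac:(lra) eps Heps) as [d2 [Hd2 Hnear_b]].
  set (e := Rmin (Rmin d1 d2) ((b - a) / 2) / 2).
  assert (Hm : 0 < Rmin (Rmin d1 d2) ((b - a) / 2)).
  { repeat apply Rmin_glb_lt; lra. }
  assert (He1 := Rmin_l (Rmin d1 d2) ((b - a) / 2)).
  assert (He2 := Rmin_r (Rmin d1 d2) ((b - a) / 2)).
  generalize (Rmin_l d1 d2) (Rmin_r d1 d2); intros Hm1 Hm2.
  specialize (Hinner e ltac:(unfold e; lra) ltac:(unfold e; lra)).
  specialize (Hnear_a (a + e) ltac:(unfold e; lra)
    ltac:(rewrite Rabs_right; unfold e; lra)).
  specialize (Hnear_b (b - e) ltac:(unfold e; lra)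
    ltac:(rewrite Rabs_left; unfold e; lra)).
  apply Rabs_def2 in Hnear_a, Hnear_b; unfold eps in *; lra.
Qed.

Lemma nonincreasing_of_deriv_nonpos (g dg : R -> R) (a b : R) :
  a <= b -> continuous_on_interval a b g ->
  (forall u, a < u < b -> derivable_pt_lim g u (dg u)) ->
  (forall u, a < u < b -> dg u <= 0) ->
  g b <= g a.
Proof.
  intros Hab Hc Hd Hneg.
  enough (- g a <= - g b) by lra.
  apply (nondecreasing_of_deriv_nonneg (fun u => - g u) (fun u => - dg u));
    [exact Hab | | | intros u Hu; specialize (Hneg u Hu); lra].
  - intros s Hs eps Heps.
    destruct (Hc s Hs eps Heps) as [delta [Hdelta Hclose]].
    exists delta; split; [exact Hdelta|].
    intros t Ht Hts; rewrite <- Rabs_Ropp.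
    replace (- (- g t - - g s)) with (g t - g s) by ring; auto.
  - intros u Hu; exact (derivable_pt_lim_opp g u _ (Hd u Hu)).
Qed.

Lemma deriv_sign_change_min (g dg : R -> R) (a b s t : R) :
  a <= s <= b -> a <= t <= b -> continuous_on_interval a b g ->
  (forall u, a < u < b -> derivable_pt_lim g u (dg u)) ->
  (forall u, a < u < s -> dg u <= 0) -> (forall u, s < u < b -> 0 <= dg u) ->
  g s <= g t.
Proof.
  intros Hs Ht Hc Hd Hneg Hpos.
  destruct (Rle_lt_dec s t) as [Hst | Hts].
  - apply (nondecreasing_of_deriv_nonneg g dg); [exact Hst | | |].
    + exact (continuous_on_subinterval a b s t g ltac:(lra) ltac:(lra) Hc).
    + intros u Hu; apply Hd; lra.
    + intros u Hu; apply Hpos; lra.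
  - apply (nonincreasing_of_deriv_nonpos g dg); [lra | | |].
    + exact (continuous_on_subinterval a b t s g ltac:(lra) ltac:(lra) Hc).
    + intros u Hu; apply Hd; lra.
    + intros u Hu; apply Hneg; lra.
Qed.

Theorem lemmaA1 (A B alpha beta : pt) (Omega L : R) (X dX : R -> pt) :
  vnorm alpha = 1 -> vnorm beta = 1 ->
  0 < Omega < PI -> beta = rot Omega alpha ->
  0 < L ->
  W2inf_with_deriv 0 L X dX ->
  (forall s, 0 <= s <= L -> vnorm (dX s) = 1) ->
  X 0 = A -> X L = B -> dX 0 = alpha -> dX L = beta ->
  (exists phi : R -> R,
      continuous_on_interval 0 L phi /\
      phi 0 = 0 /\ phi L = Omega /\
      (forall s, 0 <= s <= L -> dX s = rot (phi s) alpha) /\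
      (forall s t, 0 <= s <= t -> t <= L -> phi s <= phi t)) ->
  forall s t, 0 <= s <= L -> 0 <= t <= L ->
    inner (vsub (X t) (X s)) (rot90 (dX s)) >= 0.
Proof.
  intros Halpha _ HOmega _ _ [HX _] _ _ _ _ _
    [phi [_ [Hphi0 [HphiL [Hrot Hmono]]]]] s t Hs Ht.
  set (N := rot90 (dX s)).
  set (g := fun u => inner (X u) N).
  set (dg := fun u => inner (dX u) N).
  assert (Hg : forall u, 0 <= u <= L -> has_rderiv_on 0 L g dg u)
    by (intros u Hu; apply has_deriv_on_inner, HX, Hu).
  assert (Hdg : forall u, 0 <= u <= L -> dg u = sin (phi u - phi s)).
  { intros u Hu; unfold dg, N; rewrite (Hrot u Hu), (Hrot s Hs).
    apply inner_rot_rot90_rot, Halpha. }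
  assert (Hrange : forall u, 0 <= u <= L -> 0 <= phi u <= PI).
  { intros u Hu; rewrite <- Hphi0; split; [apply Hmono; lra|].
    enough (phi u <= phi L) by lra; apply Hmono; lra. }
  rewrite inner_vsub_l; apply Rge_minus, Rle_ge; fold (g t) (g s).
  apply (deriv_sign_change_min g dg 0 L); [exact Hs | exact Ht | | | |].
  - exact (has_rderiv_on_continuous _ _ _ _ Hg).
  - intros u Hu; apply (has_rderiv_on_derivable_pt_lim 0 L); [lra | apply Hg; lra].
  - intros u Hu; rewrite Hdg by lra.
    apply sin_sub_le0; [apply Hrange; lra | apply Hrange, Hs | apply Hmono; lra].
  - intros u Hu; rewrite Hdg by lra.
    apply sin_sub_ge0; [apply Hrange; lra | apply Hrange, Hs | apply Hmono; lra].
Qed.
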